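(* Assume $\sum_{i=1}^M b_i<1$ and let $\mathbf r^\star=\mathbf r^\star(\epsilon)$ be the energy-scarce solution defined in the context. Then, with $M$, $(w_i)$, $(b_i)$ fixed, as $\epsilon\to0^+$, $$\big|\bar\Delta(\mathbf r^\star)-\bar\Delta_{\mathrm{opt}}(\epsilon)\big|\le \epsilon\, C_2+o(\epsilon),\qquad C_2=\sum_{l=1}^M\frac{w_l}{b_l\big(1-\sum_{i=1}^M b_i\big)}\Big(3\sum_{i=1}^M b_i-\min_j b_j\Big).$$
   Context: Fix an integer $M\ge1$, weights $w_1,\dots,w_M>0$, constants $b_1,\dots,b_M>0$, and $\epsilon>0$. For $\mathbf r\in(0,\infty)^M$ write $S(\mathbf r)=\sum_{i=1}^M r_i$ and define $$\bar\Delta(\mathbf r)=\sum_{l=1}^M \frac{w_l e^{-r_l\epsilon}}{r_l}\, e^{\epsilon S(\mathbf r)}\big(1+S(\mathbf r)\big)+\sum_{l=1}^M w_l,\qquad \sigma_l(\mathbf r)=\frac{(1-e^{-r_l\epsilon})S(\mathbf r)+r_le^{-r_l\epsilon}}{S(\mathbf r)+1}.$$ Problem 1: minimize $\bar\Delta(\mathbf r)$ over $\mathbf r\in(0,\infty)^M$ subject to $\sigma_l(\mathbf r)\le b_l$ for all $l$; its optimal (infimum) value is $\bar\Delta_{\mathrm{opt}}(\epsilon)$. Energy-scarce solution (when $B:=\sum_i b_i<1$): for each $l$ let $$c_l=\frac{2b_l(1-B)^2}{b_l(1-B)^2+\sqrt{b_l^2(1-B)^4+4b_l^2(1-B)^2(B-b_l)\epsilon}},$$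 let $x^\star=\frac{\min_l c_l}{1-B}$, $\beta^\star=\sum_{i=1}^M \frac{1}{\sqrt{w_i}}$, and set $r^\star_l=\min\{b_l,\beta^\star\sqrt{w_l}\}\,x^\star$ (which equals $b_l x^\star$). *)

From Stdlib Require Import Reals.
Open Scope R_scope.

(* Indices i = 1..M of the paper are represented as i = 0..M-1. *)

Fixpoint fsum (n : nat) (f : nat -> R) : R :=
  match n with
  | O => 0
  | S k => fsum k f + f k
  end.

(* fmin n f = min_{i<n} f i, for n >= 1 (value 0 for n = 0, never used) *)
Fixpoint fmin (n : nat) (f : nat -> R) : R :=
  match n with
  | O => 0
  | S k => match k with
           | O => f O
           | _ => Rmin (fmin k f) (f k)
           end
  end.

Definition Ssum (M : nat) (r : nat -> R) : R := fsum M r.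

Definition Delta_bar (M : nat) (w : nat -> R) (eps : R) (r : nat -> R) : R :=
  fsum M (fun l => w l * exp (- r l * eps) / r l * exp (eps * Ssum M r) * (1 + Ssum M r))
  + fsum M w.

Definition sigma (M : nat) (eps : R) (r : nat -> R) (l : nat) : R :=
  ((1 - exp (- r l * eps)) * Ssum M r + r l * exp (- r l * eps)) / (Ssum M r + 1).

Definition feasible (M : nat) (b : nat -> R) (eps : R) (r : nat -> R) : Prop :=
  (forall i, (i < M)%nat -> 0 < r i) /\
  (forall l, (l < M)%nat -> sigma M eps r l <= b l).

Definition is_inf_value (P : (nat -> R) -> Prop) (f : (nat -> R) -> R) (m : R) : Prop :=
  (forall r, P r -> m <= f r) /\
  (forall y, (forall r, P r -> y <= f r) -> y <= m).

Definition Btot (M : nat) (b : nat -> R) : R := fsum M b.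

Definition c_coef (M : nat) (b : nat -> R) (eps : R) (l : nat) : R :=
  let B := Btot M b in
  2 * b l * (1 - B) ^ 2 /
  (b l * (1 - B) ^ 2 +
   sqrt (b l ^ 2 * (1 - B) ^ 4 + 4 * b l ^ 2 * (1 - B) ^ 2 * (B - b l) * eps)).

Definition x_star (M : nat) (b : nat -> R) (eps : R) : R :=
  fmin M (c_coef M b eps) / (1 - Btot M b).

Definition beta_star (M : nat) (w : nat -> R) : R :=
  fsum M (fun i => 1 / sqrt (w i)).

Definition r_star (M : nat) (w b : nat -> R) (eps : R) (l : nat) : R :=
  Rmin (b l) (beta_star M w * sqrt (w l)) * x_star M b eps.

Definition C2 (M : nat) (w b : nat -> R) : R :=
  fsum M (fun l => w l / (b l * (1 - Btot M b)) * (3 * Btot M b - fmin M b)).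

From Pilot Require Import Defs.
From Stdlib Require Import Reals Lra Lia Psatz.
Open Scope R_scope.

(** Every feasible [r] has [r_l <= b_l (1 + S(r))] (the numerator of [sigma_l] is at
    least [r_l]), and [S(r) >= r_l]; hence each summand of [Delta_bar r] is at least
    [w_l / b_l], so [Delta_opt >= sum w + Q] with [Q = sum_l w_l / b_l].  On the other
    side [r*_l = b_l x*], where [x*] is the smallest of the positive roots of
    [(B - b_l) eps x^2 + (1 - B) x - 1]; this makes [r*] feasible, and its summands
    are [(w_l / b_l) exp (eps x* (B - b_l)) (1/x* + B)] with [x* <= 1/(1 - B)] and
    [1/x* <= 1 - B + (B - min b) eps / (1 - B)].  The gap is therefore at most
    [Q ((1 + K eps) / (1 - a eps) - 1) = Q (K + a) eps + o(eps)] with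
    [a = B/(1-B)], [K = (B - min b)/(1-B)], and [Q (K + a) <= C_2 = Q (K + 2 a)]. *)

Lemma fsum_ext n f g : (forall i, (i < n)%nat -> f i = g i) -> fsum n f = fsum n g.
Proof.
  induction n as [|n IH]; intros Hfg; simpl; [reflexivity|].
  rewrite IH by (intros; apply Hfg; lia). rewrite Hfg by lia. reflexivity.
Qed.

Lemma fsum_le n f g : (forall i, (i < n)%nat -> f i <= g i) -> fsum n f <= fsum n g.
Proof.
  induction n as [|n IH]; intros Hfg; simpl; [lra|].
  apply Rplus_le_compat; [apply IH; intros; apply Hfg; lia | apply Hfg; lia].
Qed.

Lemma fsum_mulr n f c : fsum n (fun i => f i * c) = fsum n f * c.
Proof. induction n as [|n IH]; simpl; [ring|]. rewrite IH; ring. Qed.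

Lemma fsum_nonneg n f : (forall i, (i < n)%nat -> 0 <= f i) -> 0 <= fsum n f.
Proof.
  induction n as [|n IH]; intros Hf; simpl; [lra|].
  apply Rplus_le_le_0_compat; [apply IH; intros; apply Hf; lia | apply Hf; lia].
Qed.

Lemma fsum_ge_term n f k :
  (forall i, (i < n)%nat -> 0 <= f i) -> (k < n)%nat -> f k <= fsum n f.
Proof.
  induction n as [|n IH]; intros Hf Hk; [lia|]. simpl.
  assert (0 <= f n) by (apply Hf; lia).
  destruct (Nat.eq_dec k n) as [->|Hne].
  - assert (0 <= fsum n f) by (apply fsum_nonneg; intros; apply Hf; lia). lra.
  - assert (f k <= fsum n f) by (apply IH; [intros; apply Hf; lia | lia]). lra.
Qed.

Lemma fsum_pos n f : (1 <= n)%nat -> (forall i, (i < n)%nat -> 0 < f i) -> 0 < fsum n f.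
Proof.
  intros Hn Hf.
  assert (f 0%nat <= fsum n f) by (apply fsum_ge_term; [intros; left; apply Hf | ]; lia).
  assert (0 < f 0%nat) by (apply Hf; lia). lra.
Qed.

Lemma fmin_le n f k : (k < n)%nat -> fmin n f <= f k.
Proof.
  induction n as [|n IH]; intros Hk; [lia|]. simpl. destruct n as [|n].
  - replace k with 0%nat by lia. lra.
  - destruct (Nat.eq_dec k (S n)) as [->|Hne]; [apply Rmin_r|].
    eapply Rle_trans; [apply Rmin_l | apply IH; lia].
Qed.

Lemma fmin_attained n f : (1 <= n)%nat -> exists k, (k < n)%nat /\ fmin n f = f k.
Proof.
  induction n as [|n IH]; intros Hn; [lia|]. simpl. destruct n as [|n].
  - exists 0%nat; split; [lia | reflexivity].
  - destruct (IH ltac:(lia)) as [k [Hk Hfk]].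
    unfold Rmin; destruct (Rle_dec (fmin (S n) f) (f (S n))).
    + exists k; split; [lia | exact Hfk].
    + exists (S n); split; [lia | reflexivity].
Qed.

Lemma one_le_exp t : 0 <= t -> 1 <= exp t.
Proof. intros Ht. pose proof (exp_ineq1_le t). lra. Qed.

Lemma exp_le_1 t : t <= 0 -> exp t <= 1.
Proof.
  intros Ht. replace t with (- - t) by ring. rewrite exp_Ropp.
  rewrite <- Rinv_1. apply Rinv_le_contravar; [lra | apply one_le_exp; lra].
Qed.

Lemma exp_le_inv_one_sub u v : u <= v < 1 -> exp u <= / (1 - v).
Proof.
  intros [Huv Hv].
  assert (Hinv : exp u * exp (- u) = 1) by (rewrite <- exp_plus, Rplus_opp_r; apply exp_0).
  pose proof (exp_ineq1_le (- u)). pose proof (exp_pos u).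
  apply Rmult_le_reg_r with (1 - v); [lra|]. rewrite Rinv_l by lra. nra.
Qed.

(** The positive root of [p x^2 + q x - 1], rationalized so that it is also
    defined at [p = 0]. *)
Definition quad_root (p q : R) : R := 2 / (q + sqrt (q ^ 2 + 4 * p)).

Section QuadRoot.

Variables p q : R.
Hypothesis p_ge0 : 0 <= p.
Hypothesis q_gt0 : 0 < q.

Let disc := sqrt (q ^ 2 + 4 * p).

Let disc_sq : disc * disc = q ^ 2 + 4 * p.
Proof. apply sqrt_sqrt. nra. Qed.

Let q_le_disc : q <= disc.
Proof.
  rewrite <- (sqrt_pow2 q) by lra. apply sqrt_le_1_alt. lra.
Qed.

Lemma quad_root_pos : 0 < quad_root p q.
Proof. apply Rdiv_lt_0_compat; fold disc; lra. Qed.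

Lemma quad_root_le_inv : quad_root p q <= / q.
Proof.
  unfold quad_root; fold disc.
  apply Rmult_le_reg_r with (q * (q + disc)); [nra|].
  field_simplify; [lra | lra | lra].
Qed.

Lemma inv_quad_root_le : / quad_root p q <= q + p / q.
Proof.
  unfold quad_root; fold disc. rewrite Rinv_div.
  assert (disc <= q + 2 * p / q).
  { assert (0 <= p / q) by (unfold Rdiv; apply Rle_mult_inv_pos; lra).
    assert (Hsq : (q + 2 * p / q) ^ 2 = q ^ 2 + 4 * p + (2 * p / q) ^ 2) by (field; lra).
    nra. }
  replace (q + p / q) with ((q + 2 * p / q + q) / 2) by (field; lra). lra.
Qed.

Lemma quad_root_eq : p * quad_root p q ^ 2 + q * quad_root p q = 1.
Proof.
  unfold quad_root; fold disc.
  replace p with ((disc * disc - q ^ 2) / 4) at 1 by lra.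
  field. lra.
Qed.

Lemma quad_nonpos_le_root x :
  0 <= x <= quad_root p q -> p * x ^ 2 + q * x - 1 <= 0.
Proof.
  intros [Hx0 Hx]. pose proof quad_root_eq.
  assert (x ^ 2 <= quad_root p q ^ 2) by (simpl; nra). nra.
Qed.

End QuadRoot.

Section EnergyScarce.

Variable M : nat.
Variables w b : nat -> R.
Hypothesis M_ge1 : (1 <= M)%nat.
Hypothesis w_pos : forall i, (i < M)%nat -> 0 < w i.
Hypothesis b_pos : forall i, (i < M)%nat -> 0 < b i.
Hypothesis Btot_lt1 : Btot M b < 1.

Local Notation B := (Btot M b).

Lemma b_le_Btot l : (l < M)%nat -> b l <= B.
Proof. intros Hl. apply fsum_ge_term; [intros; left; apply b_pos |]; auto. Qed.

Lemma c_coef_eq eps l : (l < M)%nat ->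
  c_coef M b eps l = (1 - B) * quad_root ((B - b l) * eps) (1 - B).
Proof.
  intros Hl. pose proof (b_pos l Hl). unfold c_coef, quad_root.
  set (q := 1 - B). assert (0 < q) by (unfold q; lra).
  replace (b l ^ 2 * q ^ 4 + 4 * b l ^ 2 * q ^ 2 * (B - b l) * eps)
    with ((b l * q) * (b l * q) * (q ^ 2 + 4 * ((B - b l) * eps))) by ring.
  rewrite sqrt_mult_alt, sqrt_square by nra.
  set (s := sqrt (q ^ 2 + 4 * ((B - b l) * eps))).
  assert (0 <= s) by apply sqrt_pos. assert (0 < b l * q) by nra.
  field. split; apply Rgt_not_eq; nra.
Qed.

Lemma x_star_le_root eps l : (l < M)%nat ->
  x_star M b eps <= quad_root ((B - b l) * eps) (1 - B).
Proof.
  intros Hl. unfold x_star.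
  pose proof (fmin_le M (c_coef M b eps) l Hl) as Hmin. rewrite c_coef_eq in Hmin by exact Hl.
  apply Rmult_le_reg_r with (1 - B); [lra|].
  unfold Rdiv. rewrite Rmult_assoc, Rinv_l by lra. lra.
Qed.

Lemma x_star_attained eps : exists l, (l < M)%nat /\
  x_star M b eps = quad_root ((B - b l) * eps) (1 - B).
Proof.
  destruct (fmin_attained M (c_coef M b eps) M_ge1) as [l [Hl Hmin]].
  exists l; split; [exact Hl|]. unfold x_star. rewrite Hmin, c_coef_eq by exact Hl.
  field. lra.
Qed.

Section NonnegEps.

Variable eps : R.
Hypothesis eps_ge0 : 0 <= eps.

Let slack_ge0 l : (l < M)%nat -> 0 <= (B - b l) * eps.
Proof. intros Hl. pose proof (b_le_Btot l Hl). nra. Qed.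

Lemma x_star_pos : 0 < x_star M b eps.
Proof.
  destruct (x_star_attained eps) as [l [Hl ->]].
  apply quad_root_pos; [apply slack_ge0 | lra]; auto.
Qed.

Lemma x_star_le_inv : x_star M b eps <= / (1 - B).
Proof.
  destruct (x_star_attained eps) as [l [Hl ->]].
  apply quad_root_le_inv; [apply slack_ge0 | lra]; auto.
Qed.

Lemma inv_x_star_le : / x_star M b eps <= 1 - B + (B - fmin M b) * eps / (1 - B).
Proof.
  destruct (x_star_attained eps) as [l [Hl ->]].
  eapply Rle_trans; [apply inv_quad_root_le; [apply slack_ge0 | lra]; auto|].
  apply Rplus_le_compat_l. unfold Rdiv. apply Rmult_le_compat_r.
  - left. apply Rinv_0_lt_compat. lra.
  - pose proof (fmin_le M b l Hl). nra.
Qed.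

Lemma x_star_quad_nonpos l : (l < M)%nat ->
  (B - b l) * eps * x_star M b eps ^ 2 + (1 - B) * x_star M b eps - 1 <= 0.
Proof.
  intros Hl. apply quad_nonpos_le_root; [apply slack_ge0; auto | lra |].
  split; [left; apply x_star_pos | apply x_star_le_root; auto].
Qed.

End NonnegEps.

Lemma r_star_eq eps l : (l < M)%nat -> r_star M w b eps l = b l * x_star M b eps.
Proof.
  intros Hl. unfold r_star. f_equal. apply Rmin_left.
  assert (Hs : 0 < sqrt (w l)) by (apply sqrt_lt_R0; auto).
  assert (1 / sqrt (w l) <= beta_star M w).
  { apply (fsum_ge_term M (fun i => 1 / sqrt (w i))); auto.
    intros i Hi. left. apply Rdiv_lt_0_compat; [lra | apply sqrt_lt_R0; auto]. }
  assert (1 <= beta_star M w * sqrt (w l)).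
  { replace 1 with (1 / sqrt (w l) * sqrt (w l)) by (field; lra).
    apply Rmult_le_compat_r; lra. }
  pose proof (b_le_Btot l Hl). lra.
Qed.

Lemma Ssum_r_star eps : Ssum M (r_star M w b eps) = B * x_star M b eps.
Proof.
  unfold Ssum, Btot. rewrite <- fsum_mulr. apply fsum_ext. intros; apply r_star_eq; auto.
Qed.

Lemma feasible_r_star eps : 0 <= eps -> feasible M b eps (r_star M w b eps).
Proof.
  intros Heps. pose proof (x_star_pos eps Heps) as Hx.
  split; intros l Hl.
  - rewrite r_star_eq by exact Hl. apply Rmult_lt_0_compat; auto.
  - unfold Defs.sigma. rewrite Ssum_r_star, r_star_eq by exact Hl.
    set (x := x_star M b eps) in *. pose proof (b_pos l Hl).
    pose proof (b_le_Btot l Hl). pose proof (x_star_quad_nonpos eps Heps l Hl) as Hq.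
    fold x in Hq.
    pose proof (exp_ineq1_le (- (b l * x) * eps)).
    set (E := exp (- (b l * x) * eps)) in *.
    assert ((B - b l) * x * (1 - b l * x * eps) <= (B - b l) * x * E).
    { apply Rmult_le_compat_l; nra. }
    apply Rmult_le_reg_r with (B * x + 1); [nra|].
    unfold Rdiv. rewrite Rmult_assoc, Rinv_l by nra. nra.
Qed.

Lemma feasible_le_Ssum eps r l : feasible M b eps r -> (l < M)%nat -> r l <= Ssum M r.
Proof.
  intros [Hr _] Hl. apply fsum_ge_term; [intros; left; apply Hr |]; auto.
Qed.

Lemma feasible_le_b_Ssum eps r l : 0 <= eps -> feasible M b eps r -> (l < M)%nat ->
  r l <= b l * (Ssum M r + 1).
Proof.
  intros Heps Hfeas Hl. pose proof (feasible_le_Ssum eps r l Hfeas Hl) as HrS.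
  destruct Hfeas as [Hr Hsigma]. pose proof (Hr l Hl). pose proof (Hsigma l Hl) as Hs.
  unfold Defs.sigma in Hs. set (S := Ssum M r) in *.
  assert (HE : exp (- r l * eps) <= 1) by (apply exp_le_1; nra).
  set (E := exp (- r l * eps)) in *.
  assert (r l <= (1 - E) * S + r l * E) by nra.
  apply Rmult_le_compat_r with (r := S + 1) in Hs; [| lra].
  unfold Rdiv in Hs. rewrite Rmult_assoc, Rinv_l in Hs by lra. lra.
Qed.

Lemma Delta_bar_ge_feasible eps r : 0 <= eps -> feasible M b eps r ->
  fsum M w + fsum M (fun l => w l / b l) <= Delta_bar M w eps r.
Proof.
  intros Heps Hfeas. unfold Delta_bar. rewrite Rplus_comm.
  apply Rplus_le_compat_r, fsum_le. intros l Hl.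
  pose proof (feasible_le_Ssum eps r l Hfeas Hl).
  pose proof (feasible_le_b_Ssum eps r l Heps Hfeas Hl).
  pose proof (proj1 Hfeas l Hl). pose proof (w_pos l Hl). pose proof (b_pos l Hl).
  set (S := Ssum M r) in *.
  assert (Hexp : 1 <= exp (- r l * eps) * exp (eps * S)).
  { rewrite <- exp_plus. apply one_le_exp. nra. }
  replace (w l * exp (- r l * eps) / r l * exp (eps * S) * (1 + S))
    with (w l * (1 + S) / r l * (exp (- r l * eps) * exp (eps * S))) by (field; lra).
  assert (Hratio : w l / b l <= w l * (1 + S) / r l).
  { apply Rmult_le_reg_r with (b l * r l); [nra|].
    replace (w l / b l * (b l * r l)) with (w l * r l) by (field; lra).
    replace (w l * (1 + S) / r l * (b l * r l)) with (w l * (b l * (S + 1))) by (field; lra).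
    apply Rmult_le_compat_l; lra. }
  assert (0 < w l * (1 + S) / r l) by (apply Rdiv_lt_0_compat; nra).
  nra.
Qed.

Lemma Delta_bar_r_star_le eps : 0 <= eps -> B / (1 - B) * eps < 1 ->
  Delta_bar M w eps (r_star M w b eps) <=
  fsum M w + fsum M (fun l => w l / b l) *
    ((1 + (B - fmin M b) / (1 - B) * eps) / (1 - B / (1 - B) * eps)).
Proof.
  intros Heps Hsmall. unfold Delta_bar.
  rewrite Ssum_r_star, <- (fsum_mulr M (fun l => w l / b l)), (Rplus_comm (fsum M w)).
  apply Rplus_le_compat_r, fsum_le. intros l Hl. rewrite r_star_eq by exact Hl.
  pose proof (x_star_pos eps Heps). pose proof (x_star_le_inv eps Heps).
  pose proof (inv_x_star_le eps Heps). pose proof (b_pos l Hl). pose proof (b_le_Btot l Hl).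
  set (x := x_star M b eps) in *.
  replace (w l * exp (- (b l * x) * eps) / (b l * x) * exp (eps * (B * x)) * (1 + B * x))
    with (w l / b l * ((exp (- (b l * x) * eps) * exp (eps * (B * x))) * (/ x + B)))
    by (field; lra).
  rewrite <- exp_plus.
  apply Rmult_le_compat_l; [left; apply Rdiv_lt_0_compat; auto|].
  apply Rle_trans with
    (/ (1 - B / (1 - B) * eps) * (1 + (B - fmin M b) / (1 - B) * eps));
    [| right; unfold Rdiv; ring].
  apply Rmult_le_compat.
  - left. apply exp_pos.
  - assert (0 < / x) by (apply Rinv_0_lt_compat; lra). lra.
  - apply exp_le_inv_one_sub. split; [| lra].
    assert (x * B <= / (1 - B) * B) by (apply Rmult_le_compat_r; lra).
    replace (B / (1 - B) * eps) with (eps * (/ (1 - B) * B)) by (field; lra).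
    replace (- (b l * x) * eps + eps * (B * x)) with (eps * (x * B - b l * x)) by ring.
    apply Rmult_le_compat_l; nra.
  - unfold Rdiv in *. lra.
Qed.

Lemma C2_eq : C2 M w b =
  fsum M (fun l => w l / b l) * ((B - fmin M b) / (1 - B) + 2 * (B / (1 - B))).
Proof.
  unfold C2. rewrite <- fsum_mulr. apply fsum_ext. intros l Hl.
  pose proof (b_pos l Hl). field. split; lra.
Qed.

End EnergyScarce.

Lemma ratio_first_order_near_0 a K et : 0 <= a -> 0 <= K -> 0 < et ->
  exists delta, 0 < delta /\ forall eps, 0 < eps < delta ->
    a * eps < 1 /\ (1 + K * eps) / (1 - a * eps) <= 1 + (K + a + et) * eps.
Proof.
  intros Ha HK Het. set (C := K + a + et).
  exists (Rmin (/ (a + 1)) (et / (a * C + 1))). split.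
  { apply Rmin_pos; [apply Rinv_0_lt_compat | apply Rdiv_lt_0_compat]; unfold C; nra. }
  intros eps [Heps Hdelta].
  assert (Hsmall : eps * (a + 1) < 1).
  { apply Rmult_lt_reg_r with (/ (a + 1)); [apply Rinv_0_lt_compat; lra|].
    rewrite Rmult_assoc, Rinv_r, Rmult_1_r, Rmult_1_l by lra.
    eapply Rlt_le_trans; [exact Hdelta | apply Rmin_l]. }
  assert (Hsecond : eps * (a * C + 1) < et).
  { assert (0 < a * C + 1) by (unfold C; nra).
    apply Rmult_lt_reg_r with (/ (a * C + 1)); [apply Rinv_0_lt_compat; lra|].
    rewrite Rmult_assoc, Rinv_r, Rmult_1_r by lra.
    eapply Rlt_le_trans; [exact Hdelta | apply Rmin_r]. }
  split; [nra|].
  apply Rmult_le_reg_r with (1 - a * eps); [nra|].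
  unfold Rdiv. rewrite Rmult_assoc, Rinv_l by nra.
  (* the second-order term a C eps^2 is absorbed by et eps *)
  unfold C in *. nra.
Qed.

Theorem theorem2 (M : nat) (w b : nat -> R) (Dopt : R -> R) :
  (1 <= M)%nat ->
  (forall i, (i < M)%nat -> 0 < w i) ->
  (forall i, (i < M)%nat -> 0 < b i) ->
  Btot M b < 1 ->
  (forall eps, 0 < eps ->
     is_inf_value (feasible M b eps) (Delta_bar M w eps) (Dopt eps)) ->
  forall eta, 0 < eta ->
  exists delta, 0 < delta /\
    forall eps, 0 < eps < delta ->
      Rabs (Delta_bar M w eps (r_star M w b eps) - Dopt eps)
        <= eps * C2 M w b + eta * eps.
Proof.
  intros HM Hw Hb HB Hinf eta Heta.
  set (B := Btot M b) in *. set (Q := fsum M (fun l => w l / b l)).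
  assert (HQ : 0 < Q) by (apply fsum_pos; auto; intros; apply Rdiv_lt_0_compat; auto).
  assert (Ha : 0 <= B / (1 - B)) by (unfold Rdiv; apply Rle_mult_inv_pos;
    [left; apply fsum_pos | lra]; auto).
  assert (HK : 0 <= (B - fmin M b) / (1 - B)).
  { pose proof (fmin_le M b 0 HM).
    pose proof (b_le_Btot M b Hb 0%nat HM) as Hb0; fold B in Hb0.
    unfold Rdiv; apply Rle_mult_inv_pos; lra. }
  destruct (ratio_first_order_near_0 _ _ (eta / Q) Ha HK) as [delta [Hdelta Hnear]];
    [apply Rdiv_lt_0_compat; lra|].
  exists delta. split; [exact Hdelta|]. intros eps Heps.
  destruct (Hnear eps Heps) as [Hsmall Hratio]. destruct Heps as [Heps _].
  destruct (Hinf eps Heps) as [Hlower Hgreatest].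
  assert (Hopt_le : Dopt eps <= Delta_bar M w eps (r_star M w b eps))
    by (apply Hlower, feasible_r_star; auto; lra).
  assert (Hopt_ge : fsum M w + Q <= Dopt eps)
    by (apply Hgreatest; intros r Hr; eapply Delta_bar_ge_feasible; eauto; lra).
  pose proof (Delta_bar_r_star_le M w b HM Hw Hb HB eps ltac:(lra) Hsmall) as Hstar.
  rewrite Rabs_pos_eq by lra. rewrite C2_eq by auto. fold B Q in Hstar |- *.
  set (a := B / (1 - B)) in *. set (K := (B - fmin M b) / (1 - B)) in *.
  assert (Q * (eta / Q) = eta) by (field; lra).
  set (ratio := (1 + K * eps) / (1 - a * eps)) in *.
  apply Rmult_le_compat_l with (r := Q) in Hratio; [| lra].
  assert (0 <= Q * a * eps) by (apply Rmult_le_pos; [apply Rmult_le_pos|]; lra).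
  nra.
Qed.
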